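(* For all integers $n,m\ge 3$, $\gamma_p(C_n\times C_m)\le 4\left\lceil\frac{n}{4}\right\rceil\left\lceil\frac{m}{4}\right\rceil$.
   Context: All graphs are finite, simple and undirected. $C_n$ denotes the cycle of order $n$ and $G\times H$ the Cartesian product of graphs. For a graph $G$ without isolated vertices, a set $D\subseteq V(G)$ is a paired dominating set if every vertex outside $D$ has a neighbour in $D$ and the induced subgraph $G[D]$ has a perfect matching; $\gamma_p(G)$ is the minimum size of a paired dominating set. *)

From mathcomp Require Import all_boot.
Set Implicit Arguments. Unset Strict Implicit. Unset Printing Implicit Defensive.

(* The cycle C_n on vertex set 'I_n : i ~ j iff j = i+1 mod n or i = j+1 mod n.
   (For n >= 3 this is a simple cycle of order n.) *)
Definition cycle_adj (n : nat) : rel 'I_n :=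
  fun i j => ((i.+1 %% n) == j) || ((j.+1 %% n) == i).

Definition cart_adj (T1 T2 : finType) (e1 : rel T1) (e2 : rel T2) : rel (T1 * T2) :=
  fun u v => ((u.1 == v.1) && e2 u.2 v.2) || ((u.2 == v.2) && e1 u.1 v.1).

Section Paired.
Variables (T : finType) (adj : rel T).

Definition dominating (D : {set T}) : bool :=
  [forall v, (v \notin D) ==> [exists u in D, adj u v]].

Definition perfect_matching_of (D : {set T}) (M : {set {set T}}) : bool :=
  [forall e in M, exists x, exists y,
       [&& x \in D, y \in D, x != y, adj x y & e == [set x; y]]] &&
  [forall x in D, #|[set e in M | x \in e]| == 1].

Definition paired_dominating (D : {set T}) : bool :=
  dominating D && [exists M, perfect_matching_of D M].

(* gamma_p(G): the minimum size of a paired dominating set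
   (#|T|.+1 if none exists, which never happens for graphs without
   isolated vertices). *)
Definition gamma_p : nat :=
  \big[minn/#|T|.+1]_(D : {set T} | paired_dominating D) #|D|.
End Paired.

Definition ceil4 (n : nat) : nat := (n + 3) %/ 4.

(* Four rows times four columns of the torus contain four vertices of the
   dominating set.  The rows of C_n split into two paired dominating sets:
   the blocks {4k, 4k+1} and the blocks {4k+2, 4k+3} (both patched near the
   wrap-around when 4 does not divide n).  The columns carry two disjoint
   sets A (the multiples of 4) and B (the columns 4k+2) such that every other
   column is adjacent to both.  Taking the first row set in the columns of A
   and the second one in the columns of B, every vertex is dominated within
   its column or within its row, and the pairs of each row set stay matched
   inside their column. *)

From mathcomp Require Import all_boot order zify_ssreflect.
Import SsreflectZifyInstances.Exports.

Set Implicit Arguments.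
Unset Strict Implicit.
Unset Printing Implicit Defensive.

Section PerfectMatchingInvolution.
Variables (T : finType) (adj : rel T).

Definition matching_involution (D : {set T}) (p : T -> T) : Prop :=
  forall x, x \in D -> [/\ p x \in D, p (p x) = x, p x != x & adj x (p x)].

Lemma perfect_matching_of_involution D p : matching_involution D p ->
  perfect_matching_of adj D [set [set x; p x] | x in D].
Proof.
move=> pD; apply/andP; split.
  apply/forallP => e; apply/implyP => /imsetP [x Dx ->].
  have [Dpx _ px_neq adj_x] := pD x Dx.
  by apply/existsP; exists x; apply/existsP; exists (p x); rewrite Dx Dpx eq_sym px_neq adj_x eqxx.
apply/forallP => x; apply/implyP => Dx.
suff -> : [set e in [set [set y; p y] | y in D] | x \in e] = [set [set x; p x]].
  by rewrite cards1.
apply/setP => e; rewrite !inE; apply/andP/eqP => [[/imsetP [y Dy ->]]|->].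
  have [_ ppy _ _] := pD y Dy.
  by rewrite !inE => /orP [] /eqP -> //; rewrite ppy setUC.
by split; [apply/imsetP; exists x | rewrite !inE eqxx].
Qed.

Lemma paired_dominating_involution D p :
  dominating adj D -> matching_involution D p -> paired_dominating adj D.
Proof.
move=> domD pD; rewrite /paired_dominating domD; apply/existsP.
by exists [set [set x; p x] | x in D]; exact: perfect_matching_of_involution.
Qed.

Lemma gamma_p_le D : paired_dominating adj D -> gamma_p adj <= #|D|.
Proof. exact: (@Order.TotalTheory.bigmin_le_cond _ nat). Qed.

End PerfectMatchingInvolution.

Section CartesianProduct.
Variables (T1 T2 : finType) (e1 : rel T1) (e2 : rel T2).
Variables (S0 S2 : {set T1}) (p0 p2 : T1 -> T1) (A B : {set T2}).
Hypotheses (domS0 : dominating e1 S0) (domS2 : dominating e1 S2).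
Hypotheses (p0S0 : matching_involution e1 S0 p0) (p2S2 : matching_involution e1 S2 p2).
Hypothesis S0_S2_cover : forall i, (i \in S0) || (i \in S2).
Hypothesis disjointAB : [disjoint A & B].
Hypothesis adj_A_B :
  forall j, j \notin A -> j \notin B -> [exists a in A, e2 a j] && [exists b in B, e2 b j].

Local Notation adj := (cart_adj e1 e2).

Definition layered_set : {set T1 * T2} := setX S0 A :|: setX S2 B.

Definition layered_partner (x : T1 * T2) : T1 * T2 :=
  if x.2 \in A then (p0 x.1, x.2) else (p2 x.1, x.2).

Lemma adj_row i i' j : e1 i i' -> adj (i, j) (i', j).
Proof. by rewrite /cart_adj /= eqxx orbC => ->. Qed.

Lemma adj_col i j j' : e2 j j' -> adj (i, j) (i, j').
Proof. by rewrite /cart_adj /= eqxx => ->. Qed.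

Lemma layered_matching : matching_involution adj layered_set layered_partner.
Proof.
move=> [i j]; rewrite /layered_partner !inE /=.
have lift_row S p : matching_involution e1 S p -> i \in S ->
    [/\ p i \in S, (p (p i), j) = (i, j), (p i, j) != (i, j) & adj (i, j) (p i, j)].
  move=> pS Si; have [Spi ppi pi_neq adj_i] := pS i Si.
  by rewrite ppi xpair_eqE (negbTE pi_neq) adj_row.
case: (boolP (j \in A)) => Aj /=.
  have Bj : j \notin B by rewrite (disjointFr disjointAB).
  rewrite andbT (negbTE Bj) andbF orbF => S0i.
  by have [-> pp -> ->] := lift_row _ _ p0S0 S0i; rewrite Aj pp.
rewrite andbF /= => /andP [S2i Bj].
by have [-> pp -> ->] := lift_row _ _ p2S2 S2i; rewrite (negbTE Aj) Bj pp orbT.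
Qed.

Lemma layered_dominating : dominating adj layered_set.
Proof.
have row_neighbour S j : dominating e1 S -> forall i, i \notin S ->
    (forall u, u \in S -> (u, j) \in layered_set) ->
    [exists u in layered_set, adj u (i, j)].
  move=> domS i Si inD; have /existsP [u /andP [Su adj_u]] := implyP (forallP domS i) Si.
  by apply/existsP; exists (u, j); rewrite inD // adj_row.
apply/forallP => -[i j]; apply/implyP; rewrite !inE /= negb_or => /andP [nD0 nD2].
case: (boolP (j \in A)) => Aj.
  apply: (row_neighbour _ _ domS0); first by rewrite Aj andbT in nD0.
  by move=> u Su; rewrite !inE /= Su Aj.
case: (boolP (j \in B)) => Bj.
  apply: (row_neighbour _ _ domS2); first by rewrite Bj andbT in nD2.
  by move=> u Su; rewrite !inE /= Su Bj orbT.
have /andP [/existsP [a /andP [Aa adj_a]] /existsP [b /andP [Bb adj_b]]] := adj_A_B Aj Bj.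
case/orP: (S0_S2_cover i) => Si; apply/existsP.
  by exists (i, a); rewrite !inE /= Si Aa adj_col.
by exists (i, b); rewrite !inE /= Si Bb orbT adj_col.
Qed.

Lemma layered_paired_dominating : paired_dominating adj layered_set.
Proof. exact: paired_dominating_involution layered_dominating layered_matching. Qed.

Lemma card_layered_set : #|layered_set| <= #|S0| * #|A| + #|S2| * #|B|.
Proof. by rewrite -!cardsX (leq_card_setU _ _).1. Qed.

End CartesianProduct.

Definition cyc_adj (n a b : nat) : bool :=
  [|| a.+1 == b, b.+1 == a, (a.+1 == n) && (b == 0) | (b.+1 == n) && (a == 0)].

Lemma cycle_adj_nat n (a b : 'I_n) : cyc_adj n a b -> cycle_adj a b.
Proof.
have succ_mod (x : nat) : x < n -> x.+1 %% n = if x.+1 == n then 0 else x.+1.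
  move=> lt_x; case: ifP => [/eqP ->|ne_x]; first by rewrite modnn.
  by rewrite modn_small //; lia.
rewrite /cycle_adj /cyc_adj !succ_mod //; have := ltn_ord a; have := ltn_ord b.
by repeat case: ifP; lia.
Qed.

Lemma matching_involution_nat n (P : pred nat) (q : nat -> nat) :
  (forall i, i < n.+1 -> P i ->
     [/\ q i < n.+1, P (q i), q (q i) = i, q i != i & cyc_adj n.+1 i (q i)]) ->
  matching_involution (@cycle_adj n.+1) [set i : 'I_n.+1 | P i] (fun i => inord (q i)).
Proof.
move=> qP i; rewrite inE => Pi; have [lt_q Pq qq neq_q adj_q] := qP i (ltn_ord i) Pi.
rewrite inE !inordK // Pq qq inord_val; split => //.
  by apply: contra neq_q => /eqP /(congr1 val); rewrite /= inordK // => ->.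
by apply: cycle_adj_nat; rewrite inordK.
Qed.

Lemma cycle_neighbour_nat n (P : pred nat) (j : 'I_n.+1) :
  (exists2 i, i < n.+1 & P i && cyc_adj n.+1 i j) ->
  [exists u in [set i : 'I_n.+1 | P i], cycle_adj u j].
Proof.
case=> i lt_i /andP [Pi adj_i]; apply/existsP; exists (inord i).
by rewrite inE inordK // Pi cycle_adj_nat // inordK.
Qed.

Lemma dominating_nat n (P : pred nat) :
  (forall j, j < n.+1 -> ~~ P j -> exists2 i, i < n.+1 & P i && cyc_adj n.+1 i j) ->
  dominating (@cycle_adj n.+1) [set i : 'I_n.+1 | P i].
Proof.
move=> domP; apply/forallP => j; apply/implyP; rewrite inE => Pj.
exact/cycle_neighbour_nat/domP.
Qed.

Lemma card_set_nat n (P : pred nat) (f : nat -> nat) K :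
  (forall i, i < n.+1 -> P i -> exists2 k, k < K & f k = i) ->
  #|[set i : 'I_n.+1 | P i]| <= K.
Proof.
move=> fP; pose F (k : 'I_K) : 'I_n.+1 := inord (f k).
have sub : [set i : 'I_n.+1 | P i] \subset F @: setT.
  apply/subsetP => i; rewrite inE => Pi; have [k lt_k fk] := fP i (ltn_ord i) Pi.
  by apply/imsetP; exists (Ordinal lt_k); rewrite // /F /= fk inord_val.
apply: leq_trans (subset_leq_card sub) (leq_trans (leq_imset_card _ _) _).
by rewrite cardsT card_ord.
Qed.

(* Row i belongs to the low rows when i mod 4 < 2 and to the high rows when
   i mod 4 >= 2.  If n = 1 (mod 4), the lone low row n-1 is paired with n-2;
   if 4 does not divide n, row n-1 is paired with row 0 across the wrap. *)
Definition low_rows (n i : nat) : bool :=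
  (i %% 4 < 2) || ((n %% 4 == 1) && (i == n - 2)).

Definition low_partner (n i : nat) : nat :=
  if (n %% 4 == 1) && (i == n - 1) then n - 2
  else if (n %% 4 == 1) && (i == n - 2) then n - 1
  else if i %% 4 == 0 then i + 1 else i - 1.

Definition high_rows (n i : nat) : bool :=
  (2 <= i %% 4) || ((n %% 4 != 0) && ((i == n - 1) || (i == 0))).

Definition high_partner (n i : nat) : nat :=
  if (n %% 4 != 0) && (i == n - 1) then 0
  else if (n %% 4 != 0) && (i == 0) then n - 1
  else if i %% 4 == 2 then i + 1 else i - 1.

Definition enum_low_rows (n k : nat) : nat := minn (4 * (k %/ 2)) (n - 2) + k %% 2.

Definition enum_high_rows (n k : nat) : nat :=
  let b := minn (4 * (k %/ 2) + 2) (n - 1) in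
  if k %% 2 == 0 then b else if b.+1 == n then 0 else b.+1.

Lemma low_high_rows_cover n i : low_rows n i || high_rows n i.
Proof. rewrite /low_rows /high_rows; lia. Qed.

Section RowsOfCycle.
Variables (n : nat) (n_ge3 : 3 <= n).

Lemma low_partner_spec i : i < n -> low_rows n i ->
  [/\ low_partner n i < n, low_rows n (low_partner n i),
      low_partner n (low_partner n i) = i, low_partner n i != i
    & cyc_adj n i (low_partner n i)].
Proof.
rewrite /low_rows => lt_i low_i.
have -> : low_partner n (low_partner n i) = i.
  rewrite {2}/low_partner; repeat case: ifP => ?;
    by rewrite /low_partner; repeat case: ifP => ?; lia.
by split => //; rewrite /low_partner /cyc_adj; repeat case: ifP => ?; lia.
Qed.

Lemma high_partner_spec i : i < n -> high_rows n i ->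
  [/\ high_partner n i < n, high_rows n (high_partner n i),
      high_partner n (high_partner n i) = i, high_partner n i != i
    & cyc_adj n i (high_partner n i)].
Proof.
rewrite /high_rows => lt_i high_i.
have -> : high_partner n (high_partner n i) = i.
  rewrite {2}/high_partner; repeat case: ifP => ?;
    by rewrite /high_partner; repeat case: ifP => ?; lia.
by split => //; rewrite /high_partner /cyc_adj; repeat case: ifP => ?; lia.
Qed.

Lemma low_rows_dominate j : j < n -> ~~ low_rows n j ->
  exists2 i, i < n & low_rows n i && cyc_adj n i j.
Proof.
rewrite /low_rows /cyc_adj => lt_j not_low.
have [j2|j_not2] := boolP (j %% 4 == 2); first by exists (j - 1); lia.
have [lt_sj|last_j] := boolP (j.+1 < n); first by exists j.+1; lia.
by exists 0; lia.
Qed.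

Lemma high_rows_dominate j : j < n -> ~~ high_rows n j ->
  exists2 i, i < n & high_rows n i && cyc_adj n i j.
Proof.
rewrite /high_rows /cyc_adj => lt_j not_high.
have [j1|j_not1] := boolP (j %% 4 == 1); first by exists j.+1; lia.
have [j0|pos_j] := boolP (j == 0); first by exists (n - 1); lia.
by exists (j - 1); lia.
Qed.

Lemma enum_low_rowsP i : i < n -> low_rows n i ->
  exists2 k, k < 2 * ceil4 n & enum_low_rows n k = i.
Proof.
rewrite /low_rows /enum_low_rows /ceil4 => lt_i low_i.
have [last_i|] := boolP ((n %% 4 == 1) && (i == n - 2)).
  by exists (2 * ((n - 1) %/ 4)); lia.
have [fits|] := boolP (4 * (i %/ 4) <= n - 2).
  by exists (2 * (i %/ 4) + i %% 4); lia.
by exists (2 * (i %/ 4)).+1; lia.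
Qed.

Lemma enum_high_rowsP i : i < n -> high_rows n i ->
  exists2 k, k < 2 * ceil4 n & enum_high_rows n k = i.
Proof.
rewrite /high_rows /enum_high_rows /ceil4 => lt_i high_i.
have [last_i|] := boolP ((n %% 4 != 0) && (i == n - 1)).
  by exists (2 * ((n - 1) %/ 4)); repeat case: ifP; lia.
have [first_i|] := boolP ((n %% 4 != 0) && (i == 0)).
  by exists (2 * ((n - 1) %/ 4)).+1; repeat case: ifP; lia.
by exists (2 * (i %/ 4) + (i %% 4 - 2)); repeat case: ifP; lia.
Qed.

End RowsOfCycle.

(* Column j is in A when 4 divides j and in B when j = 2 (mod 4); when
   m = 2 (mod 4), the column m-1 lies between two columns of A and joins B. *)
Definition cols_A (j : nat) : bool := j %% 4 == 0.

Definition cols_B (m j : nat) : bool := (j %% 4 == 2) || ((j %% 4 == 1) && (j.+1 == m)).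

Definition enum_cols_B (m l : nat) : nat := minn (4 * l + 2) (m - 1).

Lemma cols_A_B_disjoint m j : ~~ (cols_A j && cols_B m j).
Proof. rewrite /cols_A /cols_B; lia. Qed.

Lemma enum_cols_AP m j : j < m -> cols_A j -> exists2 l, l < ceil4 m & 4 * l = j.
Proof. by rewrite /cols_A /ceil4 => lt_j A_j; exists (j %/ 4); lia. Qed.

Section ColumnsOfCycle.
Variables (m : nat) (m_ge3 : 3 <= m).

Lemma cols_A_B_adjacent j : j < m -> ~~ cols_A j -> ~~ cols_B m j ->
  (exists2 a, a < m & cols_A a && cyc_adj m a j) /\
  (exists2 b, b < m & cols_B m b && cyc_adj m b j).
Proof.
rewrite /cols_A /cols_B /cyc_adj => lt_j not_A not_B.
have [j1|j_not1] := boolP (j %% 4 == 1); first by split; [exists (j - 1) | exists j.+1]; lia.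
have [lt_sj|last_j] := boolP (j.+1 < m); first by split; [exists j.+1 | exists (j - 1)]; lia.
by split; [exists 0 | exists (j - 1)]; lia.
Qed.

Lemma enum_cols_BP j : j < m -> cols_B m j -> exists2 l, l < ceil4 m & enum_cols_B m l = j.
Proof. by rewrite /cols_B /ceil4 /enum_cols_B => lt_j B_j; exists (j %/ 4); lia. Qed.

End ColumnsOfCycle.

Theorem theorem5p1 (n m : nat) (hn : 3 <= n) (hm : 3 <= m) :
  gamma_p (cart_adj (@cycle_adj n) (@cycle_adj m)) <= 4 * ceil4 n * ceil4 m.
Proof.
case: n hn => [//|n] hn; case: m hm => [//|m] hm.
pose S0 := [set i : 'I_n.+1 | low_rows n.+1 i].
pose S2 := [set i : 'I_n.+1 | high_rows n.+1 i].
pose A := [set j : 'I_m.+1 | cols_A j]; pose B := [set j : 'I_m.+1 | cols_B m.+1 j].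
have disjAB : [disjoint A & B].
  by apply/pred0P => j; rewrite /= !inE; exact/negbTE/cols_A_B_disjoint.
have adjAB (j : 'I_m.+1) : j \notin A -> j \notin B ->
    [exists a in A, cycle_adj a j] && [exists b in B, cycle_adj b j].
  rewrite !inE => not_A not_B; have [] := cols_A_B_adjacent hm (ltn_ord j) not_A not_B.
  by move=> /cycle_neighbour_nat -> /cycle_neighbour_nat ->.
have cover (i : 'I_n.+1) : (i \in S0) || (i \in S2) by rewrite !inE low_high_rows_cover.
have pd := layered_paired_dominating
  (dominating_nat (low_rows_dominate hn)) (dominating_nat (high_rows_dominate hn))
  (matching_involution_nat (low_partner_spec hn)) (matching_involution_nat (high_partner_spec hn))
  cover disjAB adjAB.
apply: leq_trans (gamma_p_le pd) (leq_trans (card_layered_set _ _ _ _) _).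
have cardS0 : #|S0| <= 2 * ceil4 n.+1 := card_set_nat (enum_low_rowsP hn).
have cardS2 : #|S2| <= 2 * ceil4 n.+1 := card_set_nat (enum_high_rowsP hn).
have cardA : #|A| <= ceil4 m.+1 := card_set_nat (@enum_cols_AP m.+1).
have cardB : #|B| <= ceil4 m.+1 := card_set_nat (enum_cols_BP hm).
apply: leq_trans (leq_add (leq_mul cardS0 cardA) (leq_mul cardS2 cardB)) _.
by rewrite -!mulnDl; exact: leqnn.
Qed.
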